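(* Let $L=L_2(q)=\mathrm{PSL}_2(q)$ be simple and let $r$ be an odd prime dividing $|L|$ but not dividing $q$. Then for every involution $x\in\mathrm{PGL}_2(q)$ (viewed as an automorphism of $L$) one has $\beta_r(x,L)=2$.
   Context: $\mathrm{PGL}_2(q)$ is identified with the group of inner-diagonal automorphisms of $L=\mathrm{PSL}_2(q)$. For a nonabelian finite simple group $L$ (identified with $\mathrm{Inn}(L)$), a nontrivial $x\in\mathrm{Aut}(L)$ and a prime $r$ dividing $|L|$, $\beta_r(x,L)$ is the smallest $k$ such that some $g_1,\dots,g_k\in L$ give a subgroup $\langle x^{g_1},\dots,x^{g_k}\rangle$ of $\langle L,x\rangle$ of order divisible by $r$. *)

From mathcomp Require Import all_boot all_algebra all_fingroup all_solvable all_field.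
Set Implicit Arguments. Unset Strict Implicit. Unset Printing Implicit Defensive.
Import GRing.Theory.
Local Open Scope group_scope.

Section PSL2.
Variable F : finFieldType.

Definition GL2 := {'GL_2[F]}.

Definition SL2set : {set GL2} := [set g : GL2 | (\det (GLval g) == 1)%R].

Lemma SL2_group_set : group_set SL2set.
Proof.
apply/group_setP; split; first by rewrite inE GL_1E det1.
move=> x y; rewrite !inE GL_ME /= det_mulmx => /eqP-> /eqP->.
by rewrite mulr1.
Qed.
Canonical SL2_group := group SL2_group_set.

Definition ZGL2 : {set GL2} := 'Z([set: GL2]).

Definition PGL2 := coset_of ZGL2.
Definition PGL2set : {set PGL2} := ([set: GL2] / ZGL2)%g.

(* L = PSL_2(q) = SL_2(q) Z / Z as a subgroup of PGL_2(q) *)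
Definition PSL2 : {group PGL2} := (SL2_group / ZGL2)%G.
End PSL2.

Definition beta_holds (gT : finGroupType) (r : nat) (x : gT) (L : {set gT})
  (k : nat) : Prop :=
  exists g : 'I_k -> gT,
    (forall i, g i \in L) /\ (r %| #|<< [set (x ^ g i)%g | i : 'I_k] >>|)%N.

Definition beta_eq (gT : finGroupType) (r : nat) (x : gT) (L : {set gT})
  (k : nat) : Prop :=
  beta_holds r x L k /\ (forall j, (j < k)%N -> ~ beta_holds r x L j).

From mathcomp Require Import all_boot all_algebra all_fingroup all_solvable all_field.
From mathcomp Require Import ring.

(* Lift x to a non-scalar a in GL_2(q) with a^2 = l scalar, and lift an element
   of order r of L (Cauchy) to a matrix of SL_2(q), conjugate in GL_2(q) to the
   companion matrix M = [[0,-1],[1,t]].  As r is odd and prime to q, M is not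
   +-(unipotent), so t^2 <> 4 in odd characteristic and the binary form
   u^2 + t u v + v^2 represents l.  This gives a non-scalar X with X^2 = l and
   X M^-1 X = l M.  Non-scalar square roots of the same scalar are conjugate
   in GL_2(q), so X is conjugate to a, and X X^M = l M^2 shows that x times a
   suitable L-conjugate of x has order #[M^2] = r modulo scalars.  One
   conjugate of x only generates a group of order 2, which r does not divide. *)

Set Implicit Arguments. Unset Strict Implicit. Unset Printing Implicit Defensive.
Import GRing.Theory.
Local Open Scope ring_scope.

Section Matrix22.
Variable R : comNzRingType.
Implicit Types (a b c d : R) (A : 'M[R]_2).

Definition mx22 a b c d : 'M[R]_2 :=
  \matrix_(i, j) if i == 0 then if j == 0 then a else b else if j == 0 then c else d.

Lemma ord2P (i : 'I_2) : i = 0 \/ i = 1.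
Proof. by case: i => [[|[|//]] ?]; [left | right]; apply: val_inj. Qed.

Lemma mx22E A : A = mx22 (A 0 0) (A 0 1) (A 1 0) (A 1 1).
Proof.
by apply/matrixP => i j; rewrite mxE; case: (ord2P i) => ->; case: (ord2P j) => ->.
Qed.

Lemma mx22_inj a b c d a' b' c' d' :
  mx22 a b c d = mx22 a' b' c' d' -> [/\ a = a', b = b', c = c' & d = d'].
Proof.
move=> eqA; have E i j := congr1 (fun A => A i j) eqA.
by move: (E 0 0) (E 0 1) (E 1 0) (E 1 1); rewrite !mxE.
Qed.

Lemma mulmx22 a b c d a' b' c' d' :
  mx22 a b c d *m mx22 a' b' c' d' =
  mx22 (a * a' + b * c') (a * b' + b * d') (c * a' + d * c') (c * b' + d * d').
Proof.
apply/matrixP => i j; rewrite !mxE big_ord_recl big_ord1 !mxE /=.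
by case: (ord2P i) => ->; case: (ord2P j) => ->.
Qed.

Lemma scale_mx22 s a b c d : s *: mx22 a b c d = mx22 (s * a) (s * b) (s * c) (s * d).
Proof.
by apply/matrixP => i j; rewrite !mxE; case: (ord2P i) => ->; case: (ord2P j) => ->.
Qed.

Lemma add_mx22 a b c d a' b' c' d' :
  mx22 a b c d + mx22 a' b' c' d' = mx22 (a + a') (b + b') (c + c') (d + d').
Proof.
by apply/matrixP => i j; rewrite !mxE; case: (ord2P i) => ->; case: (ord2P j) => ->.
Qed.

Lemma scalar_mx22 a : a%:M = mx22 a 0 0 a.
Proof.
by apply/matrixP => i j; rewrite !mxE; case: (ord2P i) => ->; case: (ord2P j) => ->.
Qed.

Lemma det_mx22 a b c d : \det (mx22 a b c d) = a * d - b * c.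
Proof.
rewrite (expand_det_row _ 0) big_ord_recl big_ord1 /cofactor !det_mx11 !mxE /=.
by rewrite /bump /= expr0 expr1 mul1r mulN1r mulrN.
Qed.

Lemma det_companion22 d s : \det (mx22 0 d 1 s) = - d.
Proof. by rewrite det_mx22 mul0r mulr1 sub0r. Qed.

Lemma mx22_CayleyHamilton A :
  A *m A = (A 0 0 + A 1 1) *: A - (\det A)%:M.
Proof.
have [a [b [c [d ->]]]] : exists a b c d, A = mx22 a b c d by do 4!eexists; apply: mx22E.
rewrite !mxE /= det_mx22 mulmx22 scale_mx22 scalar_mx22 -scaleN1r !scale_mx22 add_mx22.
by congr mx22; ring.
Qed.

Lemma mx22_scalarP A : reflect (A 0 1 = 0 /\ A 1 0 = 0 /\ A 0 0 = A 1 1) (is_scalar_mx A).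
Proof.
apply: (iffP is_scalar_mxP) => [[k ->]|[b0 [c0 ad]]]; first by rewrite !mxE.
by exists (A 0 0); rewrite [LHS]mx22E scalar_mx22 b0 c0 ad.
Qed.

Lemma expmx22_companion_trace2 e k : e ^+ 2 = 1 ->
  mx22 0 (-1) 1 (e *+ 2) ^+ k = e ^+ k *: mx22 (1 - k%:R) (- (k%:R * e)) (k%:R * e) (1 + k%:R).
Proof.
move=> e2; elim: k => [|k IH].
  by rewrite !expr0 scale1r mul0r !subr0 oppr0 addr0 -scalar_mx22.
rewrite exprSr IH -mulmxE -scalemxAl mulmx22 exprSr -scalerA !scale_mx22.
congr mx22; ring: e2.
Qed.

End Matrix22.

Lemma mx22_similar_companion (F : fieldType) (B : 'M[F]_2) s d :
  ~~ is_scalar_mx B -> B *m B = s *: B + d%:M ->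
  exists2 P, P \in unitmx & B *m P = P *m mx22 0 d 1 s.
Proof.
have [a [b [c [e ->]]]] : exists a b c e, B = mx22 a b c e by do 4!eexists; apply: mx22E.
move=> nsc; rewrite mulmx22 scale_mx22 scalar_mx22 add_mx22 => /mx22_inj[h1 h2 h3 h4].
(* [P x1 x2] has columns [w = (x1, x2)] and [B w]; it is invertible unless [w] is an
   eigenvector of [B], and non-scalar [B] has a non-eigenvector among [e1], [e2], [e1 + e2]. *)
pose P x1 x2 := mx22 x1 (a * x1 + b * x2) x2 (c * x1 + e * x2).
have BP x1 x2 : mx22 a b c e *m P x1 x2 = P x1 x2 *m mx22 0 d 1 s.
  rewrite !mulmx22; congr mx22; [ring | | ring | ].
    transitivity ((a * a + b * c) * x1 + (a * b + b * e) * x2); first ring.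
    by rewrite h1 h2; ring.
  transitivity ((c * a + e * c) * x1 + (c * b + e * e) * x2); first ring.
  by rewrite h3 h4; ring.
have P_unit x1 x2 : c * x1 ^+ 2 + (e - a) * x1 * x2 - b * x2 ^+ 2 != 0 -> P x1 x2 \in unitmx.
  by rewrite unitmxE unitfE det_mx22 => nz; apply: contra nz => /eqP <-; apply/eqP; ring.
have [c0|nz_c] := eqVneq c 0; last first.
  by exists (P 1 0) => //; apply: P_unit; rewrite expr1n expr0n !(mulr0, mulr1, subr0, addr0).
have [b0|nz_b] := eqVneq b 0; last first.
  exists (P 0 1) => //; apply: P_unit.
  by rewrite expr1n expr0n !(mulr0, mul0r, mulr1, add0r, sub0r) oppr_eq0.
exists (P 1 1) => //; apply: P_unit; rewrite c0 b0 !mul0r !mulr1 add0r subr0 subr_eq0.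
by apply: contra nsc => /eqP ea; apply/mx22_scalarP; rewrite !mxE.
Qed.

Section FiniteField.
Variable F : finFieldType.

(* [x |-> (x^2, x precedes -x)] is injective and misses [(0, true)] *)
Lemma card_finField_sqr : (#|F| < 2 * #|[set x ^+ 2 | x : F]|)%N.
Proof.
set S := [set _ | x : F].
pose h (x : F) := (x ^+ 2, (enum_rank x < enum_rank (- x))%N).
have h_inj : injective h.
  move=> x y [/eqP]; rewrite eqf_sqr => /orP[/eqP // | /eqP ->]; rewrite opprK.
  by case: ltngtP => // /val_inj/enum_rank_inj.
have sub_h : h @: [set: F] \subset setX S [set: bool] :\ (0, true).
  apply/subsetP => _ /imsetP[x _ ->]; have Sx : x ^+ 2 \in S by apply/imsetP; exists x.
  rewrite in_setD1 in_setX Sx in_setT andbT xpair_eqE negb_and eqb_id.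
  by have [->|nz_x] := eqVneq x 0; rewrite ?oppr0 ?ltnn ?orbT // expf_neq0.
have S0 : (0, true) \in setX S [set: bool].
  by rewrite !inE andbT; apply/imsetP; exists 0; rewrite ?expr0n.
have := cardsD1 (0, true) (setX S [set: bool]); rewrite S0 cardsX cardsT card_bool mulnC => ->.
by move: (subset_leq_card sub_h); rewrite card_imset // cardsT.
Qed.

Lemma finField_sqr_add_mul_sqr (c l : F) : c != 0 -> exists a b, a ^+ 2 + c * b ^+ 2 = l.
Proof.
move=> nz_c; set S := [set x ^+ 2 | x : F].
pose T := [set l - c * s | s in S].
have card_T : #|T| = #|S| by apply: card_imset => s1 s2 /addrI/oppr_inj/(mulfI nz_c).
have /set0Pn[_ /setIP[/imsetP[a _ ->] /imsetP[_ /imsetP[b _ ->] E]]] : S :&: T != set0.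
  apply: contraTneq card_finField_sqr => ST0; rewrite -leqNgt mul2n -addnn -{2}card_T.
  by rewrite -cardsUI ST0 cards0 addn0 max_card.
by exists a, b; rewrite E; ring.
Qed.

Lemma finField_binary_form_surj (t l : F) : ((2%:R : F) != 0 -> t ^+ 2 != 4%:R) ->
  exists u v, u ^+ 2 + t * u * v + v ^+ 2 = l.
Proof.
move=> t_ok; have [two0|nz_2] := eqVneq (2%:R : F) 0.
  have [a [b E]] := finField_sqr_add_mul_sqr l (oner_neq0 F).
  by exists (a + b), 0; rewrite -E; ring: two0.
have nz_4 : (4%:R : F) != 0 by rewrite (natrM F 2 2) mulf_neq0.
have nz_c : (4%:R - t ^+ 2) / 4%:R != 0.
  by rewrite mulf_neq0 ?invr_eq0 // subr_eq0 eq_sym t_ok.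
have [a [b E]] := finField_sqr_add_mul_sqr l nz_c.
by exists (a - t * b / 2%:R), b; rewrite -E; field; rewrite nz_4 nz_2.
Qed.

Lemma companion_trace2_exp_card (t : F) : (2%:R : F) != 0 -> t ^+ 2 = 4%:R ->
  is_scalar_mx (mx22 0 (-1) 1 t ^+ #|F|).
Proof.
move=> nz_2 t2; have tE : t = (t / 2%:R) *+ 2 by rewrite -mulr_natr divfK.
have e2 : (t / 2%:R) ^+ 2 = 1.
  by rewrite expr_div_n t2; field; rewrite (natrM F 2 2) mulf_neq0.
have q0 : #|F|%:R = 0 :> F by rewrite -(FinRing.zmodXgE (U := F)) -cardsT expg_cardG ?inE.
rewrite tE expmx22_companion_trace2 // q0 mul0r subr0 oppr0 addr0 -scalar_mx22.
by rewrite scale_scalar_mx scalar_mx_is_scalar.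
Qed.

End FiniteField.

Lemma invmx_companion22 (R : comUnitRingType) (t : R) :
  invmx (mx22 0 (-1) 1 t) = mx22 t 1 (-1) 0.
Proof.
have MM' : mx22 0 (-1) 1 t *m mx22 t 1 (-1) 0 = 1%:M.
  by rewrite mulmx22 scalar_mx22; congr mx22; ring.
have unitM : mx22 0 (-1) 1 t \in unitmx.
  by rewrite unitmxE det_companion22 opprK unitr1.
by rewrite -[RHS](mulKmx unitM) MM' mulmx1.
Qed.

(* [X] and [M^-1 X] both have trace 0 and determinant [-l], hence square to [l]. *)
Lemma companion_sqr_scalar_twist (F : finFieldType) (t l : F) :
  l != 0 -> ((2%:R : F) != 0 -> t ^+ 2 != 4%:R) ->
  exists2 X, ~~ is_scalar_mx X &
    X *m X = l%:M /\ X *m invmx (mx22 0 (-1) 1 t) *m X = l *: mx22 0 (-1) 1 t.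
Proof.
move=> nz_l t_ok; have [u [v [nz_u Q]]] : exists u v, u != 0 /\ u ^+ 2 + t * u * v + v ^+ 2 = l.
  have [u [v Q]] := finField_binary_form_surj l t_ok.
  have [u0|] := eqVneq u 0; last by exists u, v.
  exists v, u; split; last by rewrite -Q; ring.
  by apply: contra nz_l => /eqP v0; rewrite -Q u0 v0; apply/eqP; ring.
exists (mx22 v (u + t * v) u (- v)).
  by apply: contra nz_u => /mx22_scalarP[_ []]; rewrite mxE /= => ->.
by rewrite invmx_companion22 !mulmx22 scalar_mx22 scale_mx22 -Q; split; congr mx22; ring.
Qed.

Section GL2.
Variable F : finFieldType.
Local Notation GL := (GL2 F).
Local Notation Z := (ZGL2 F).
Implicit Types (g h : GL) (A : 'M[F]_2).

Definition GLof A : GL := insubd (1%g : GL) A.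

Lemma GLofK A : \det A != 0 -> GLval (GLof A) = A.
Proof. by move=> nz_det; rewrite insubdK // unfold_in unitmxE unitfE. Qed.

Lemma GLvalJ g h : GLval (g ^ h)%g = invmx (GLval h) *m (GLval g *m GLval h).
Proof. by rewrite conjgE !GL_MxE GL_VxE. Qed.

Lemma GLvalX g n : GLval (g ^+ n)%g = GLval g ^+ n.
Proof. exact: FinRing.val_unitX. Qed.

Lemma det_GLvalJ g h : \det (GLval (g ^ h)%g) = \det (GLval g).
Proof. by rewrite GLvalJ !det_mulmx mulrCA -det_mulmx mulVmx ?GL_unitmx // det1 mulr1. Qed.

Lemma norm_ZGL2 g : g \in 'N(Z)%g.
Proof. exact: subsetP (normal_norm (center_normal _)) g (in_setT g). Qed.

Lemma ZGL2E g : (g \in Z) = is_scalar_mx (GLval g).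
Proof.
apply/idP/idP => [/centerP[_ cZg] | /is_scalar_mxP[c gc]]; last first.
  apply/centerP; split=> [|h _]; rewrite ?inE //; apply: val_inj.
  by change (GLval (g * h)%g = GLval (h * g)%g); rewrite !GL_MxE gc mul_mx_scalar mul_scalar_mx.
have comm A : \det A != 0 -> GLval g *m A = A *m GLval g.
  by move=> nz; have := congr1 GLval (cZg (GLof A) (in_setT _)); rewrite !GL_MxE GLofK.
have [a [b [c [d gE]]]] : exists a b c d, GLval g = mx22 a b c d.
  by do 4!eexists; apply: mx22E.
have E1 : \det (mx22 1 1 0 1 : 'M[F]_2) != 0 by rewrite det_mx22 !mulr1 mulr0 subr0 oner_eq0.
have E2 : \det (mx22 1 0 1 1 : 'M[F]_2) != 0 by rewrite det_mx22 !mulr1 subr0 oner_eq0.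
move: (comm _ E1) (comm _ E2); rewrite gE !mulmx22 => /mx22_inj[h1 h2 _ _] /mx22_inj[h3 _ _ _].
rewrite !(mulr1, mulr0, mul1r, mul0r, addr0, add0r) in h1 h2 h3.
have c0 : c = 0 by apply: (addrI a); rewrite addr0 -h1.
have b0 : b = 0 by apply: (addrI a); rewrite addr0 h3.
have ad : a = d by apply: (addIr b); rewrite h2 addrC.
by apply/mx22_scalarP; rewrite !mxE /= b0 c0 ad.
Qed.

Lemma GL2_conj_companion g s d : d != 0 -> ~~ is_scalar_mx (GLval g) ->
  GLval g *m GLval g = s *: GLval g + d%:M -> exists h, (g ^ h)%g = GLof (mx22 0 d 1 s).
Proof.
move=> nz_d nsc_g /(mx22_similar_companion nsc_g)[P unitP gP].
have nz_detP : \det P != 0 by rewrite -unitfE -unitmxE.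
exists (GLof P); apply: val_inj; change (GLval (g ^ GLof P)%g = GLval (GLof (mx22 0 d 1 s))).
by rewrite GLvalJ !GLofK ?gP ?mulKmx // det_companion22 oppr_eq0.
Qed.

Lemma GL2_conj_sqr_scalar g h l : l != 0 ->
  ~~ is_scalar_mx (GLval g) -> ~~ is_scalar_mx (GLval h) ->
  GLval g *m GLval g = l%:M -> GLval h *m GLval h = l%:M -> exists w, (h ^ w)%g = g.
Proof.
move=> nz_l nsc_g nsc_h g2 h2.
have [wg gC] : exists wg, (g ^ wg)%g = GLof (mx22 0 l 1 0).
  by apply: GL2_conj_companion; rewrite ?g2 ?scale0r ?add0r.
have [wh hC] : exists wh, (h ^ wh)%g = GLof (mx22 0 l 1 0).
  by apply: GL2_conj_companion; rewrite ?h2 ?scale0r ?add0r.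
by exists (wh * wg^-1)%g; rewrite conjgM hC -gC conjgK.
Qed.

Lemma coset_ZGL2_mul_conj g m l : l != 0 ->
  GLval g *m invmx (GLval m) *m GLval g = l *: GLval m ->
  coset Z (g * g ^ m)%g = (coset Z m ^+ 2)%g.
Proof.
move=> nz_l gmg; have nz_detl : \det (l%:M : 'M[F]_2) != 0 by rewrite det_scalar expf_neq0.
have zZ : GLof l%:M \in Z by rewrite ZGL2E GLofK ?scalar_mx_is_scalar.
have -> : (g * g ^ m = GLof l%:M * m ^+ 2)%g.
  apply: val_inj; change (GLval (g * g ^ m)%g = GLval (GLof l%:M * m ^+ 2)%g).
  by rewrite GL_MxE GLvalJ GL_MxE GLofK // expgS expg1 GL_MxE !mulmxA gmg mul_scalar_mx.
by rewrite coset_kerl // -morphX ?norm_ZGL2.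
Qed.

End GL2.

Section PSL2.
Variable F : finFieldType.
Local Notation GL := (GL2 F).
Local Notation Z := (ZGL2 F).

Lemma lift_PGL2_involution (x : PGL2 F) : x \in PGL2set F -> #[x]%g = 2 ->
  exists a : GL, exists2 l, l != 0 &
    [/\ coset Z a = x, ~~ is_scalar_mx (GLval a) & GLval a *m GLval a = l%:M].
Proof.
case/morphimP=> a _ _ -> ox; exists a.
have a2Z : (a ^+ 2)%g \in Z.
  apply: coset_idr; rewrite ?norm_ZGL2 //.
  by rewrite -[1%g](expg_order (coset Z a)) ox -morphX ?norm_ZGL2.
move: a2Z; rewrite ZGL2E GLvalX expr2 -mulmxE => /is_scalar_mxP[l a2].
exists l; last split=> //.
  apply: contraTneq (GL_det a) => l0.
  by rewrite negbK -sqrf_eq0 expr2 -det_mulmx a2 l0 det_scalar expr0n.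
by rewrite -ZGL2E; apply: contraPN ox => /coset_id a1 /=; rewrite a1 order1.
Qed.

Lemma PSL2_conj_companion (y : PGL2 F) : y \in PSL2 F -> y != 1%g ->
  exists t, exists2 m : GL, GLval m = mx22 0 (-1) 1 t & #[coset Z m]%g = #[y]%g.
Proof.
case/morphimP=> b _; rewrite inE => /eqP detb -> /= nty.
have nsc_b : ~~ is_scalar_mx (GLval b) by rewrite -ZGL2E; apply: contra nty => /coset_id->.
have b2 := mx22_CayleyHamilton (GLval b); rewrite detb -scaleN1r scalemx1 in b2.
have nz_m1 : (-1 : F) != 0 by rewrite oppr_eq0 oner_eq0.
have [p bp] := GL2_conj_companion nz_m1 nsc_b b2.
exists (GLval b 0 0 + GLval b 1 1), (b ^ p)%g.
  by rewrite bp GLofK // det_companion22 opprK oner_eq0.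
by rewrite -[RHS](orderJ _ (coset Z p)) -morphJ ?norm_ZGL2.
Qed.

Lemma companion_trace2_order_dvd (m : GL) t : GLval m = mx22 0 (-1) 1 t ->
  (2%:R : F) != 0 -> t ^+ 2 = 4%:R -> (#[coset Z m]%g %| #|F|)%N.
Proof.
move=> mM nz_2 t2; rewrite order_dvdn -morphX ?norm_ZGL2 //= coset_id // ZGL2E.
by rewrite GLvalX mM companion_trace2_exp_card.
Qed.

Lemma PSL2_involution_conj_product (r : nat) (x : PGL2 F) :
  prime r -> odd r -> (r %| #|PSL2 F|)%N -> ~~ (r %| #|F|)%N ->
  x \in PGL2set F -> #[x]%g = 2 -> exists2 k, k \in PSL2 F & #[x * x ^ k]%g = r.
Proof.
move=> pr_r odd_r r_L r'q xP ox.
have [a [l nz_l [xa nsc_a a2]]] := lift_PGL2_involution xP ox.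
have [y yL oy] := Cauchy pr_r r_L.
have nty : y != 1%g by apply: contraTneq pr_r => y1; rewrite -oy y1 order1.
have [t [m mM om]] := PSL2_conj_companion yL nty.
have t_ok : (2%:R : F) != 0 -> t ^+ 2 != 4%:R.
  by move=> nz_2; apply: contra r'q => /eqP t2; rewrite -oy -om (companion_trace2_order_dvd mM).
have [X nsc_X [X2 XmX]] := companion_sqr_scalar_twist nz_l t_ok.
have nz_detX : \det X != 0.
  by apply: contra nz_l; rewrite -sqrf_eq0 expr2 -det_mulmx X2 det_scalar sqrf_eq0.
have xxX : GLval (GLof X) = X := GLofK nz_detX.
have [w xxw] : exists w, (GLof X ^ w)%g = a.
  by apply: GL2_conj_sqr_scalar nz_l nsc_a _ a2 _; rewrite xxX.
exists (coset Z (m ^ w))%g.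
  by apply: mem_morphim; rewrite ?norm_ZGL2 // inE det_GLvalJ mM det_companion22 opprK.
rewrite -xa -morphJ ?norm_ZGL2 // -morphM ?norm_ZGL2 // -xxw -conjJg -conjMg.
rewrite morphJ ?norm_ZGL2 // orderJ /= (coset_ZGL2_mul_conj nz_l) ?xxX ?mM //.
have /eqP r2 : coprime r 2 by rewrite coprimen2.
by rewrite orderXgcd om oy r2 divn1.
Qed.

End PSL2.

Section Beta.
Variables (gT : finGroupType) (r : nat) (x : gT) (L : {group gT}).

Lemma not_beta_holds0 : r != 1%N -> ~ beta_holds r x L 0.
Proof.
move=> nt_r [g [_]]; rewrite (_ : [set _ | i : 'I_0] = set0) ?gen0 ?cards1 ?dvdn1 ?(negPf nt_r) //.
by apply/setP => y; rewrite inE; apply/imsetP => -[[]].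
Qed.

Lemma not_beta_holds1 : ~~ (r %| #[x]%g)%N -> ~ beta_holds r x L 1.
Proof.
move=> r'x [g [_]]; rewrite (_ : [set _ | i : 'I_1] = [set x ^ g ord0]%g).
  by rewrite -[#|_|]/(#[_]%g) orderJ (negPf r'x).
apply/setP => y; rewrite inE.
by apply/imsetP/eqP => [[i _ ->] | ->]; [rewrite (ord1 i) | exists ord0].
Qed.

Lemma beta_holds2 k : k \in L -> (r %| #[x * x ^ k]%g)%N -> beta_holds r x L 2.
Proof.
move=> kL r_dvd; exists (fun i => if i == ord0 then 1%g else k); split.
  by move=> i; case: ifP.
apply: dvdn_trans r_dvd (order_dvdG _); rewrite groupM ?mem_gen //; apply/imsetP.
  by exists ord0; rewrite ?conjg1.
by exists ord_max.
Qed.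

End Beta.

Unset Implicit Arguments. Set Strict Implicit.

Theorem lemma1p9 (F : finFieldType) (r : nat) (x : PGL2 F) :
  simple (PSL2 F) ->
  prime r -> odd r ->
  (r %| #|PSL2 F|)%N -> ~~ (r %| #|F|)%N ->
  x \in PGL2set F -> #[x]%g = 2%N ->
  beta_eq r x (PSL2 F) 2.
Proof.
move=> _ pr_r odd_r r_L r'q xP ox; split.
  have [k kL oxk] := PSL2_involution_conj_product pr_r odd_r r_L r'q xP ox.
  by apply: (beta_holds2 kL); rewrite oxk.
case=> [|[|//]] _.
  by apply: not_beta_holds0; rewrite eq_sym neq_ltn prime_gt1 ?orbT.
by apply: not_beta_holds1; rewrite ox (dvdn_prime2 pr_r) //; apply: contraL odd_r => /eqP->.
Qed.
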